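(* Let $k\ge 3$. A graph $G$ is $k$-chromatic and mixed-double-critical if and only if $G$ is the complete graph $K_k$.
   Context: All graphs are finite and simple. A graph $G$ is (vertex-)critical if $\chi(G-v)<\chi(G)$ for every vertex $v$. A vertex-critical $k$-chromatic graph $G$ is mixed-double-critical if for every vertex $x\in V(G)$ and every edge $e\in E(G-x)$ we have $\chi(G-x-e)\le\chi(G)-2$. *)

From mathcomp Require Import all_boot.
Set Implicit Arguments. Unset Strict Implicit. Unset Printing Implicit Defensive.

(* Subgraphs are given by a vertex set V and
   an adjacency relation (only edges with both ends in V count). *)
Definition simple_graph (T : finType) (e : rel T) : Prop :=
  symmetric e /\ irreflexive e.

Definition proper_coloring (T : finType) (V : {set T}) (e : rel T)
  (k : nat) (f : T -> nat) : Prop :=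
  (forall x, x \in V -> f x < k) /\
  (forall x y, x \in V -> y \in V -> e x y -> f x <> f y).

Definition colorable (T : finType) (V : {set T}) (e : rel T) (k : nat) : Prop :=
  exists f, proper_coloring V e k f.

(* Since an irreflexive graph
   is always #|T|-colourable, the least such k lies in [0, #|T|], so chi is
   the first k in iota 0 (#|T|+1) that works. *)
Definition colorableb (T : finType) (V : {set T}) (e : rel T) (k : nat) : bool :=
  [exists f : {ffun T -> 'I_k.+1},
     [forall x, (x \in V) ==> (f x < k)] &&
     [forall x, forall y, [&& x \in V, y \in V & e x y] ==> (f x != f y)]].

Lemma colorableP (T : finType) (V : {set T}) (e : rel T) (k : nat) :
  reflect (colorable V e k) (colorableb V e k).
Proof.
apply: (iffP existsP) => [[f /andP[/forallP H1 /forallP H2]]|[f [H1 H2]]].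
  exists (fun x => nat_of_ord (f x)); split => [x xV|x y xV yV exy].
    by have := H1 x; rewrite xV.
  move=> E; have /forallP := H2 x => /(_ y); rewrite xV yV exy /=.
  by rewrite -(inj_eq val_inj) /= E eqxx.
exists [ffun x => inord (f x)]; apply/andP; split; apply/forallP => x.
  apply/implyP => xV; rewrite ffunE inordK; first exact: H1.
  by apply: ltnW; rewrite ltnS; exact: H1.
apply/forallP => y; apply/implyP => /and3P[xV yV exy]; rewrite !ffunE.
apply/negP => /eqP /(congr1 val) /=; rewrite !inordK.
- exact: H2.
- by rewrite ltnS; apply: ltnW; exact: H1.
- by rewrite ltnS; apply: ltnW; exact: H1.
Qed.

Definition chi (T : finType) (V : {set T}) (e : rel T) : nat :=
  head 0 [seq k <- iota 0 #|T|.+1 | colorableb V e k].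

Definition del_edge (T : finType) (e : rel T) (u v : T) : rel T :=
  fun x y => e x y && ~~ (((x == u) && (y == v)) || ((x == v) && (y == u))).

Definition chrom (T : finType) (e : rel T) : nat := chi [set: T] e.

Definition vertex_critical (T : finType) (e : rel T) : Prop :=
  forall v : T, chi ([set: T] :\ v) e < chrom e.

Definition mixed_double_critical (T : finType) (e : rel T) : Prop :=
  vertex_critical e /\
  forall x u v : T, u != x -> v != x -> e u v ->
    chi ([set: T] :\ x) (del_edge e u v) <= chrom e - 2.

Definition is_complete_graph (T : finType) (e : rel T) (k : nat) : Prop :=
  #|T| = k /\ forall x y : T, x != y -> e x y.

From mathcomp Require Import all_boot.
From mathcomp Require Import zify.
Set Implicit Arguments. Unset Strict Implicit. Unset Printing Implicit Defensive.

(* If G is mixed-double-critical and x, y are non-adjacent, then either y has a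
   neighbour u, and a (k-2)-colouring of G - x - yu extends to G by giving x and
   y one new common colour, or y is isolated, and a (k-1)-colouring of G - y
   extends trivially; both contradict chi(G) = k.  Conversely, in K_k deleting a
   vertex x and an edge uv lets u and v share a colour, so k-2 colours suffice. *)

Lemma head_filter_iota_min (p : pred nat) m n k :
  m <= k -> k < m + n -> p k ->
  p (head 0 [seq i <- iota m n | p i]) && (head 0 [seq i <- iota m n | p i] <= k).
Proof.
elim: n m => [|n IH] m mk kmn pk; first by lia.
rewrite /=; case: ifP => pm /=; first by rewrite pm mk.
have km : k != m by apply: contraFneq pm => <-.
apply: IH => //; lia.
Qed.

Lemma head_filter_iota0_le (p : pred nat) n :
  head 0 [seq i <- iota 0 n.+1 | p i] <= n.
Proof.
case E: [seq i <- iota 0 n.+1 | p i] => [|a s] //=.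
have : a \in [seq i <- iota 0 n.+1 | p i] by rewrite E mem_head.
by rewrite mem_filter mem_iota => /andP[_ /andP[_]]; rewrite add0n ltnS.
Qed.

Lemma colorable_mono (T : finType) (V : {set T}) (e : rel T) m m' :
  m <= m' -> colorable V e m -> colorable V e m'.
Proof. by move=> mm' [f [fm fe]]; exists f; split=> // x /fm/leq_trans; apply. Qed.

Section Colourings.

Variables (T : finType) (e : rel T).

Definition complete : Prop := forall x y : T, x != y -> e x y.

Lemma colorable_map (V W : {set T}) (h : T -> T) :
  (forall z, z \in V -> h z \in W) ->
  (forall a b, a \in V -> b \in V -> e a b -> h a != h b) ->
  colorable V e #|W|.
Proof.
move=> hW hne; exists (fun z => index (h z) (enum W)); split.
  by move=> z zV; rewrite cardE index_mem mem_enum hW.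
move=> a b aV bV eab E; move/eqP: (hne a b aV bV eab); apply.
have ha : h a \in enum W by rewrite mem_enum hW.
by rewrite -(nth_index (h a) ha) E nth_index // mem_enum hW.
Qed.

Lemma chi_le (V : {set T}) m : colorable V e m -> chi V e <= m.
Proof.
move=> Vm; case: (leqP m #|T|) => [mT|Tm].
  have /andP[] // := @head_filter_iota_min (colorableb V e) 0 #|T|.+1 m
    (leq0n m) mT (introT (colorableP _ _ _) Vm).
exact: leq_trans (head_filter_iota0_le _ _) (ltnW Tm).
Qed.

Lemma complete_card_le_colorable (V : {set T}) m :
  complete -> colorable V e m -> #|V| <= m.
Proof.
move=> Ke [f [fm fe]].
have -> : #|V| = size (map f (enum V)) by rewrite size_map cardE.
rewrite -(size_iota 0 m); apply: uniq_leq_size.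
  rewrite map_inj_in_uniq ?enum_uniq // => x y; rewrite !mem_enum => xV yV fxy.
  by case: (eqVneq x y) => // /Ke /(fe x y xV yV).
by move=> _ /mapP[x xV ->]; rewrite mem_iota add0n fm // -mem_enum.
Qed.


Hypothesis irr : irreflexive e.

Lemma colorable_card (V : {set T}) : colorable V e #|V|.
Proof.
apply: (@colorable_map V V id) => // a b _ _ eab.
by apply: contraTneq eab => ->; rewrite irr.
Qed.

Lemma chi_colorable (V : {set T}) : colorable V e (chi V e).
Proof.
apply/colorableP.
have /andP[] // := @head_filter_iota_min (colorableb V e) 0 #|T|.+1 #|V|
  (leq0n _) (max_card _) (introT (colorableP _ _ _) (colorable_card V)).
Qed.

Lemma chrom_complete : complete -> chrom e = #|T|.
Proof.
move=> Ke; apply/eqP; rewrite /chrom -cardsT eqn_leq; apply/andP; split.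
- exact/chi_le/colorable_card.
- exact: complete_card_le_colorable Ke (chi_colorable _).
Qed.

Hypothesis sym : symmetric e.

Lemma colorable_add_isolated (V : {set T}) m y :
  0 < m -> (forall z, ~~ e y z) ->
  colorable (V :\ y) e m -> colorable V e m.
Proof.
move=> m0 isoy [c [cm ce]].
exists (fun z => if z == y then 0 else c z); split.
  by move=> z zV; case: eqP => // /eqP zy; apply: cm; rewrite !inE zy.
move=> a b aV bV eab.
case: (eqVneq a y) => [ay|ay]; first by move: (isoy b); rewrite -ay eab.
case: (eqVneq b y) => [by'|by']; first by move: (isoy a); rewrite -by' sym eab.
by apply: ce; rewrite ?inE ?ay ?by'.
Qed.

Lemma colorable_merge_nonadjacent (V : {set T}) m x y u :
  ~~ e x y -> colorable (V :\ x) (del_edge e y u) m -> colorable V e m.+1.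
Proof.
move=> nexy [c [cm ce]].
exists (fun z => if (z == x) || (z == y) then m else c z); split.
  move=> z zV; case: ifP => [//|/norP[zx _]].
  by apply: leqW; apply: cm; rewrite !inE zx.
move=> a b aV bV eab.
case: (boolP ((a == x) || (a == y))) => ha; case: (boolP ((b == x) || (b == y))) => hb.
- move: eab nexy.
  by case/orP: ha => /eqP ->; case/orP: hb => /eqP ->; rewrite ?irr // sym => ->.
- case/norP: hb => bx _; have := cm b; rewrite !inE bx bV => /(_ isT); lia.
- case/norP: ha => ax _; have := cm a; rewrite !inE ax aV => /(_ isT); lia.
- case/norP: ha => ax ay; case/norP: hb => bx b_y.
  apply: ce; rewrite ?inE ?ax ?bx //.
  by rewrite /del_edge eab (negbTE ay) (negbTE b_y) andbF.
Qed.

(* Identifying v with its non-neighbour u. *)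
Lemma colorable_identify (V : {set T}) u v :
  u \in V -> u != v -> ~~ e u v -> ~~ e v u -> colorable V e #|V :\ v|.
Proof.
move=> uV uv neuv nevu.
apply: (@colorable_map V _ (fun z => if z == v then u else z)).
  by move=> z zV; case: eqVneq => [_|zv]; rewrite !inE ?uv ?zv.
move=> a b _ _ eab.
case: (eqVneq a v) => [av|av]; case: (eqVneq b v) => [bv|bv].
- by move: eab; rewrite av bv irr.
- by apply: contraTneq eab => <-; rewrite av.
- by apply: contraTneq eab => ->; rewrite bv.
- by apply: contraTneq eab => ->; rewrite irr.
Qed.

End Colourings.

Lemma irreflexive_del_edge (T : finType) (e : rel T) u v :
  irreflexive e -> irreflexive (del_edge e u v).
Proof. by move=> irr x; rewrite /del_edge irr. Qed.

Lemma mixed_double_critical_complete (T : finType) (e : rel T) :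
  simple_graph e -> 2 <= chrom e -> mixed_double_critical e -> complete e.
Proof.
move=> [sym irr] k2 [vc mdc] x y xy; apply/negPn/negP => nexy.
suff : colorable [set: T] e (chrom e).-1 by move/chi_le; rewrite -/(chrom e); lia.
case: (pickP (fun u => (u != x) && e y u)) => [u /andP[ux eyu] | isoy].
- have yx : y != x by rewrite eq_sym.
  have colGxyu := colorable_mono (mdc x y u yx ux eyu)
    (chi_colorable (irreflexive_del_edge y u irr) ([set: T] :\ x)).
  by apply: colorable_mono (colorable_merge_nonadjacent irr sym nexy colGxyu); lia.
- have iso : forall z, ~~ e y z.
    move=> z; case: (eqVneq z x) => [->|zx]; first by rewrite sym.
    by move: (isoy z); rewrite /= zx => /negbT.
  have k1 : 0 < (chrom e).-1 by lia.
  apply: (colorable_add_isolated (V := [set: T]) sym k1 iso).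
  apply: colorable_mono (chi_colorable irr _).
  by have := vc y; lia.
Qed.

Lemma complete_mixed_double_critical (T : finType) (e : rel T) :
  irreflexive e -> complete e -> 0 < #|T| -> mixed_double_critical e.
Proof.
move=> irr Ke T0; rewrite /mixed_double_critical /vertex_critical chrom_complete //.
split=> [v | x u v ux vx euv].
  apply: leq_ltn_trans (chi_le (colorable_card irr _)) _.
  by have := cardsD1 v [set: T]; rewrite cardsT in_setT; lia.
have uv : u != v by apply: contraTneq euv => ->; rewrite irr.
have irr' := irreflexive_del_edge u v irr.
apply: leq_trans (chi_le (colorable_identify irr' _ uv _ _)) _.
- by rewrite !inE ux.
- by rewrite /del_edge !eqxx andbF.
- by rewrite /del_edge !eqxx orbT andbF.
have := cardsD1 x [set: T]; have := cardsD1 v ([set: T] :\ x).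
rewrite cardsT in_setT !inE vx; lia.
Qed.

Theorem theorem34 (k : nat) (T : finType) (e : rel T) :
  3 <= k -> simple_graph e ->
  (chrom e = k /\ mixed_double_critical e) <-> is_complete_graph e k.
Proof.
move=> k3 [sym irr]; split.
- move=> [ck mdc]; have k2 : 2 <= chrom e by rewrite ck; lia.
  have Ke := mixed_double_critical_complete (conj sym irr) k2 mdc.
  by split=> //; rewrite -ck chrom_complete.
- move=> [cardT Ke]; split; first by rewrite chrom_complete.
  by apply: complete_mixed_double_critical irr Ke _; lia.
Qed.
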